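(* Let $n>1$ be an integer. Then \[ \mathrm{SL}_2(\mathbb{Z}[1/n])^{\mathrm{ab}} \simeq \begin{cases} 0 & \text{if } 2\mid n,\ 3\mid n,\\ \mathbb{Z}/3 & \text{if } 2\mid n,\ 3\nmid n,\\ \mathbb{Z}/4 & \text{if } 2\nmid n,\ 3\mid n,\\ \mathbb{Z}/12 & \text{if } 2\nmid n,\ 3\nmid n. \end{cases} \]
   Context: For a group $G$, $G^{\mathrm{ab}}=G/[G,G]$; $\mathbb{Z}[1/n]$ is the subring of $\mathbb{Q}$ generated by $1/n$. *)

From HB Require Import structures.
From mathcomp Require Import all_boot all_order all_algebra.
Set Implicit Arguments. Unset Strict Implicit. Unset Printing Implicit Defensive.
Import Order.TTheory GRing.Theory Num.Theory.
Local Open Scope ring_scope.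

(* Z[1/n] as the subring of Q generated by 1/n: rationals q with q * n^k in Z
   for some k. *)
Definition inZinv (n : nat) (q : rat) : Prop :=
  exists (k : nat) (z : int), q * (n%:R) ^+ k = z%:~R.

Definition SL2 (n : nat) (A : 'M[rat]_2) : Prop :=
  (forall i j, inZinv n (A i j)) /\ \det A = 1.

Definition commm (A B : 'M[rat]_2) : 'M[rat]_2 :=
  invmx A *m invmx B *m A *m B.

Inductive in_commSL2 (n : nat) : 'M[rat]_2 -> Prop :=
| cSL2_one : in_commSL2 n 1%:M
| cSL2_comm A B : SL2 n A -> SL2 n B -> in_commSL2 n (commm A B)
| cSL2_mul X Y : in_commSL2 n X -> in_commSL2 n Y -> in_commSL2 n (X *m Y)
| cSL2_inv X : in_commSL2 n X -> in_commSL2 n (invmx X).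

(* G^ab = G/[G,G] is isomorphic to the abelian group H: there is a group
   homomorphism G -> H that is surjective with kernel exactly [G,G]. *)
Definition SL2ab_iso (n : nat) (H : zmodType) : Prop :=
  exists f : 'M[rat]_2 -> H,
    [/\ forall A B, SL2 n A -> SL2 n B -> f (A *m B) = f A + f B,
        forall h : H, exists A, SL2 n A /\ f A = h
      & forall A, SL2 n A -> (f A = 0 <-> in_commSL2 n A)].

From HB Require Import structures.
From mathcomp Require Import all_boot all_order all_algebra.
From mathcomp Require Import ring zify.
Set Implicit Arguments. Unset Strict Implicit. Unset Printing Implicit Defensive.
Import Order.TTheory GRing.Theory Num.Theory.
Local Open Scope ring_scope.

(* Every element of G = SL_2(Z[1/n]) is congruent modulo [G,G] to an upper
   unipotent matrix x12 k with k an integer: Euclid's algorithm on the first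
   column writes it as a product of elementary matrices, and conjugating by
   diag(n^j, n^-j) shows x12 t = x12 (t n^2j) modulo [G,G], which is integral
   for j large.  So G^ab is cyclic, generated by the class of x12 1.
   Two relations bound its order: w = x12 1 x21 (-1) x12 1 is congruent to
   x12 3 and has order 4, so x12 12 lies in [G,G]; and the commutator of
   diag(1/n, n) with x12 (-1) is x12 (n^2 - 1).  Hence the order divides
   gcd(12, n^2 - 1), which is 1, 3, 4 or 12 according as 2 and 3 divide n.
   Conversely, when 3 (resp. 2) does not divide n, reduction modulo 3 (resp. 4)
   followed by the abelianization SL_2(Z/3) -> Z/3 (resp. SL_2(Z/4) -> Z/4),
   given by a table checked by computation, maps x12 1 to a generator. *)

Section Matrix2.
Variable R : comUnitRingType.

Definition mx2 (a b c d : R) : 'M[R]_2 :=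
  \matrix_(i, j) if i == 0 then (if j == 0 then a else b) else (if j == 0 then c else d).

Lemma mx2_eta (A : 'M[R]_2) : A = mx2 (A 0 0) (A 0 1) (A 1 0) (A 1 1).
Proof.
apply/matrixP => i j; rewrite !mxE.
by case: i => [[|[|i]] Hi] //; case: j => [[|[|j]] Hj] //=; congr (A _ _); apply: val_inj.
Qed.

Lemma mulmx_mx2 a b c d a' b' c' d' :
  mx2 a b c d *m mx2 a' b' c' d' =
  mx2 (a * a' + b * c') (a * b' + b * d') (c * a' + d * c') (c * b' + d * d').
Proof.
apply/matrixP => i j; rewrite !mxE !big_ord_recl big_ord0 !mxE addr0.
by case: i => [[|[|i]] Hi] //; case: j => [[|[|j]] Hj].
Qed.

Lemma det_mx2 a b c d : \det (mx2 a b c d) = a * d - b * c.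
Proof.
rewrite (expand_det_row _ 0) !big_ord_recl big_ord0 /cofactor !mxE /=.
rewrite !det_mx11 !mxE /= /bump /= expr0 expr1; ring.
Qed.

Lemma mx2_1 : 1%:M = mx2 1 0 0 1.
Proof.
by apply/matrixP => i j; rewrite !mxE; case: i => [[|[|i]] Hi] //; case: j => [[|[|j]] Hj].
Qed.

Lemma invmx_mx2 a b c d : a * d - b * c = 1 -> invmx (mx2 a b c d) = mx2 d (- b) (- c) a.
Proof.
move=> det1; have A_unit : mx2 a b c d \in unitmx by rewrite unitmxE det_mx2 det1 unitr1.
have AB1 : mx2 a b c d *m mx2 d (- b) (- c) a = 1%:M.
  by rewrite mulmx_mx2 mx2_1 -det1; congr mx2; ring.
by rewrite -[LHS]mulmx1 -AB1 mulmxA mulVmx // mul1mx.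
Qed.

End Matrix2.

Section Steinberg.
Variable F : fieldType.

Definition x12 (t : F) := mx2 1 t 0 1.
Definition x21 (t : F) := mx2 1 0 t 1.
Definition w12 (u : F) := mx2 0 u (- u^-1) 0.
Definition h12 (u : F) := mx2 u 0 0 u^-1.

Lemma x12D s t : x12 s *m x12 t = x12 (s + t).
Proof. by rewrite mulmx_mx2; congr mx2; ring. Qed.

Lemma x12_0 : x12 0 = 1%:M.
Proof. by rewrite mx2_1. Qed.

Lemma invmx_x12 t : invmx (x12 t) = x12 (- t).
Proof. by rewrite invmx_mx2 ?oppr0 //; ring. Qed.

Lemma invmx_h12 u : u != 0 -> invmx (h12 u) = h12 u^-1.
Proof. by move=> u0; rewrite /h12 invmx_mx2 ?invrK ?oppr0 //; field. Qed.

Lemma h12_conj_x12 u t : u != 0 -> h12 u^-1 *m x12 t *m h12 u = x12 (t / (u * u)).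
Proof. by move=> u0; rewrite !mulmx_mx2 invrK; congr mx2; field. Qed.

Lemma w12E u : u != 0 -> w12 u = x12 u *m x21 (- u^-1) *m x12 u.
Proof. by move=> u0; rewrite !mulmx_mx2; congr mx2; field. Qed.

Lemma h12E u : u != 0 -> h12 u = w12 u *m w12 (-1).
Proof. by move=> u0; rewrite !mulmx_mx2 invrN invr1; congr mx2; field. Qed.

Lemma x21_conj t : x21 t = w12 1 *m x12 (- t) *m invmx (w12 1).
Proof.
rewrite /w12 invr1 invmx_mx2; last ring.
by rewrite !mulmx_mx2; congr mx2; ring.
Qed.

Lemma w12_1_order4 : w12 1 *m w12 1 *m w12 1 *m w12 1 = 1%:M.
Proof. by rewrite !mulmx_mx2 mx2_1 invr1; congr mx2; ring. Qed.

End Steinberg.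

Section InZinv.
Variable n : nat.
Hypothesis n_gt0 : (0 < n)%N.

Local Notation Zn := (inZinv n).
Local Notation N := (n%:R : rat).

Lemma natrn_neq0 : N != 0.
Proof. by rewrite pnatr_eq0 -lt0n. Qed.

Lemma inZinv_int (z : int) : Zn z%:~R.
Proof. by exists 0%N, z; rewrite expr0 mulr1. Qed.

Lemma inZinvD x y : Zn x -> Zn y -> Zn (x + y).
Proof.
move=> [k [z xz]] [l [w yw]]; exists (k + l)%N, (z * n%:R ^+ l + w * n%:R ^+ k).
by rewrite intrD !intrM !rmorphXn /= !rmorph_nat -xz -yw exprD; ring.
Qed.

Lemma inZinvM x y : Zn x -> Zn y -> Zn (x * y).
Proof.
move=> [k [z xz]] [l [w yw]]; exists (k + l)%N, (z * w).
by rewrite intrM -xz -yw exprD; ring.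
Qed.

Lemma inZinvN x : Zn x -> Zn (- x).
Proof. by move=> [k [z xz]]; exists k, (- z); rewrite intrN -xz mulNr. Qed.

Lemma inZinv0 : Zn 0. Proof. exact: (inZinv_int 0). Qed.
Lemma inZinv1 : Zn 1. Proof. exact: (inZinv_int 1). Qed.

Lemma inZinv_natrX j : Zn (N ^+ j).
Proof. by exists 0%N, (n%:R ^+ j); rewrite expr0 mulr1 rmorphXn /= rmorph_nat. Qed.

Lemma inZinv_natrVX j : Zn (N ^+ j)^-1.
Proof. by exists j, 1; rewrite mulVf // expf_neq0 // natrn_neq0. Qed.

End InZinv.

#[local] Hint Resolve inZinv0 inZinv1 inZinvN inZinvD inZinvM : core.

Lemma sqrn_mod12 n : (n ^ 2 %% 12 =
  if 2 %| n then (if 3 %| n then 0 else 4) else (if 3 %| n then 9 else 1))%N.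
Proof.
rewrite -modnXm {2 3 4}(divn_eq n 12) !dvdn_addr ?dvdn_mull //.
by have := ltn_pmod n (isT : (0 < 12)%N); move: (n %% 12)%N; do 12?case.
Qed.

(* gcd(12, n^2 - 1), the order of the class of x12 1 in the abelianization. *)
Definition SL2ab_order (n : nat) : nat :=
  if (2 %| n)%N then (if (3 %| n)%N then 1 else 3) else (if (3 %| n)%N then 4 else 12).

Section SL2Z.
Variable n : nat.
Hypothesis n_gt0 : (0 < n)%N.

Local Notation Zn := (inZinv n).
Local Notation G := (SL2 n).
Local Notation C := (in_commSL2 n).
Local Notation N := (n%:R : rat).

Variant SL2_spec (A : 'M[rat]_2) : Prop :=
  SL2Spec a b c d of A = mx2 a b c d & Zn a & Zn b & Zn c & Zn d & a * d - b * c = 1.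

Lemma SL2_mx2P a b c d :
  G (mx2 a b c d) -> [/\ Zn a, Zn b, Zn c, Zn d & a * d - b * c = 1].
Proof. by case=> Z; rewrite det_mx2; move: (Z 0 0) (Z 0 1) (Z 1 0) (Z 1 1); rewrite !mxE. Qed.

Lemma SL2P A : G A -> SL2_spec A.
Proof. by rewrite [A]mx2_eta => /SL2_mx2P[]; apply: SL2Spec. Qed.

Lemma SL2_mx2 a b c d : Zn a -> Zn b -> Zn c -> Zn d -> a * d - b * c = 1 ->
  G (mx2 a b c d).
Proof.
move=> Za Zb Zc Zd det1; split; last by rewrite det_mx2.
by move=> i j; rewrite mxE; case: ifP => _; case: ifP.
Qed.

Lemma SL2_mul A B : G A -> G B -> G (A *m B).
Proof.
case/SL2P=> a b c d -> Za Zb Zc Zd det1; case/SL2P=> a' b' c' d' -> Za' Zb' Zc' Zd' det1'.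
rewrite mulmx_mx2; apply: SL2_mx2; auto.
transitivity ((a * d - b * c) * (a' * d' - b' * c')); first ring.
by rewrite det1 det1' mulr1.
Qed.

Lemma SL2_inv A : G A -> G (invmx A).
Proof.
case/SL2P=> a b c d -> Za Zb Zc Zd det1.
by rewrite invmx_mx2 //; apply: SL2_mx2; auto; rewrite -det1; ring.
Qed.

Lemma SL2_1 : G 1%:M.
Proof. by rewrite mx2_1; apply: SL2_mx2; auto; ring. Qed.

Lemma SL2_unit A : G A -> A \in unitmx.
Proof. by case=> _ detA; rewrite unitmxE detA unitr1. Qed.

Lemma SL2_x12 t : Zn t -> G (x12 t).
Proof. by move=> Zt; apply: SL2_mx2; auto; ring. Qed.

Lemma SL2_x12_int (k : int) : G (x12 k%:~R).
Proof. exact/SL2_x12/inZinv_int. Qed.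

Lemma SL2_x21 t : Zn t -> G (x21 t).
Proof. by move=> Zt; apply: SL2_mx2; auto; ring. Qed.

Lemma SL2_w12 u : u != 0 -> Zn u -> Zn u^-1 -> G (w12 u).
Proof. by move=> u0 Zu Zu'; apply: SL2_mx2; auto; field. Qed.

Lemma SL2_h12 u : u != 0 -> Zn u -> Zn u^-1 -> G (h12 u).
Proof. by move=> u0 Zu Zu'; apply: SL2_mx2; auto; field. Qed.

Lemma commSL2_sub X : C X -> G X.
Proof.
elim=> {X} [|A B GA GB|X Y _ GX _ GY|X _ GX]; first exact: SL2_1.
- by rewrite /commm; do !apply: SL2_mul => //; apply: SL2_inv.
- exact: SL2_mul.
- exact: SL2_inv.
Qed.

Lemma commSL2_conj g X : G g -> C X -> C (g *m X *m invmx g).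
Proof.
move=> Gg CX; have GX := commSL2_sub CX.
have -> : g *m X *m invmx g = commm (invmx g) (invmx X) *m X.
  by rewrite /commm !invmxK -!mulmxA mulVmx ?mulmx1 // SL2_unit.
by apply: cSL2_mul => //; apply: cSL2_comm; apply: SL2_inv.
Qed.

Definition equiv_x12 A (k : int) := C (A *m x12 (- k%:~R)).
Definition x12_rep A := exists k : int, equiv_x12 A k.

Lemma equiv_x12_mul A B k l : G A -> G B -> equiv_x12 A k -> equiv_x12 B l ->
  equiv_x12 (A *m B) (k + l).
Proof.
move=> GA GB Ak Bl; rewrite /equiv_x12.
have -> : A *m B *m x12 (- (k + l)%:~R) =
    A *m x12 (- k%:~R) *m (x12 k%:~R *m (B *m x12 (- l%:~R)) *m invmx (x12 k%:~R)).
  rewrite invmx_x12 !mulmxA -(mulmxA A (x12 _) (x12 _)) x12D addNr x12_0 mulmx1.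
  by rewrite -(mulmxA (A *m B) (x12 _) (x12 _)) x12D intrD opprD addrC.
by apply: cSL2_mul => //; apply: commSL2_conj => //; apply: SL2_x12_int.
Qed.

Lemma equiv_x12_conj g A k : G g -> G A -> equiv_x12 A k -> equiv_x12 (g *m A *m invmx g) k.
Proof.
move=> Gg GA Ak; rewrite /equiv_x12.
have -> : g *m A *m invmx g *m x12 (- k%:~R) =
    g *m (A *m x12 (- k%:~R)) *m invmx g *m commm (invmx g) (x12 (- k%:~R)).
  rewrite /commm invmxK invmx_x12 opprK !mulmxA -(mulmxA _ (invmx g) g) mulVmx ?SL2_unit //.
  by rewrite mulmx1 -(mulmxA (g *m A) (x12 _) (x12 _)) x12D addNr x12_0 mulmx1.
apply: cSL2_mul; first exact: commSL2_conj.
by apply: cSL2_comm; [apply: SL2_inv | rewrite -intrN; apply: SL2_x12_int].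
Qed.

Lemma x12_repM A B : G A -> G B -> x12_rep A -> x12_rep B -> x12_rep (A *m B).
Proof. by move=> GA GB [k Ak] [l Bl]; exists (k + l); apply: equiv_x12_mul. Qed.

Lemma x12_rep_x12 t : Zn t -> x12_rep (x12 t).
Proof.
case=> j [z tz]; set u := N ^+ j in tz.
have u0 : u != 0 by rewrite expf_neq0 // natrn_neq0.
have zuE : (z * n%:R ^+ j)%:~R = z%:~R * u by rewrite intrM rmorphXn /= rmorph_nat.
exists (z * n%:R ^+ j); rewrite /equiv_x12 zuE.
have -> : x12 t *m x12 (- (z%:~R * u)) = commm (h12 u) (x12 (- (z%:~R * u))).
  rewrite /commm invmx_h12 // invmx_x12 opprK h12_conj_x12 //; congr (x12 _ *m _).
  by rewrite -tz; field.
apply: cSL2_comm; first exact: SL2_h12 u0 (inZinv_natrX n j) (inZinv_natrVX n_gt0 j).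
by rewrite -zuE -intrN; apply: SL2_x12_int.
Qed.

Lemma x12_rep_x21 t : Zn t -> x12_rep (x21 t).
Proof.
move=> Zt; rewrite x21_conj; have [k tk] := x12_rep_x12 (inZinvN Zt).
by exists k; apply: equiv_x12_conj => //; [apply: SL2_w12 | apply: SL2_x12]; rewrite ?invr1; auto.
Qed.

Lemma x12_rep_w12 u : u != 0 -> Zn u -> Zn u^-1 -> x12_rep (w12 u).
Proof.
move=> u0 Zu Zu'; have Zu'' : Zn (- u^-1) by auto.
have [Gx Gy] := (SL2_x12 Zu, SL2_x21 Zu'').
rewrite w12E //; apply: (x12_repM (SL2_mul Gx Gy) Gx _ (x12_rep_x12 Zu)).
exact: x12_repM Gx Gy (x12_rep_x12 Zu) (x12_rep_x21 Zu'').
Qed.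

Lemma SL2_w12N1 : G (w12 (-1)).
Proof. by apply: SL2_w12; rewrite ?invrN ?invr1 ?oppr_eq0 ?oner_eq0; auto. Qed.

Lemma x12_rep_w12N1 : x12_rep (w12 (-1)).
Proof. by apply: x12_rep_w12; rewrite ?invrN ?invr1 ?oppr_eq0 ?oner_eq0; auto. Qed.

Lemma x12_rep_h12 u : u != 0 -> Zn u -> Zn u^-1 -> x12_rep (h12 u).
Proof.
move=> u0 Zu Zu'; rewrite h12E //.
exact: x12_repM (SL2_w12 u0 Zu Zu') SL2_w12N1 (x12_rep_w12 u0 Zu Zu') x12_rep_w12N1.
Qed.

Lemma x12_rep_upper a b d : Zn a -> Zn b -> Zn d -> a * d = 1 -> x12_rep (mx2 a b 0 d).
Proof.
move=> Za Zb Zd ad1.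
have a0 : a != 0 by apply: contra_eq_neq ad1 => ->; rewrite mul0r eq_sym oner_neq0.
have a'E : a^-1 = d by rewrite -[a^-1]mulr1 -ad1 mulrA mulVf ?mul1r.
have -> : mx2 a b 0 d = h12 a *m x12 (d * b).
  by rewrite mulmx_mx2 a'E; congr mx2; rewrite ?mulrA ?ad1; ring.
have [Za' Zdb] : Zn a^-1 /\ Zn (d * b) by rewrite a'E; auto.
exact: x12_repM (SL2_h12 a0 Za Za') (SL2_x12 Zdb) (x12_rep_h12 a0 Za Za') (x12_rep_x12 Zdb).
Qed.

(* Induction on |s c|, where s clears the denominators of the first column. *)
Lemma x12_rep_euclid (s : rat) (M : nat) a b c d : s != 0 -> G (mx2 a b c d) ->
    (exists za : int, s * a = za%:~R) -> (exists zc : int, s * c = zc%:~R /\ (`|zc| < M)%N) ->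
  x12_rep (mx2 a b c d).
Proof.
elim: M a b c d => [|M IH] a b c d s0 GA [za sa] [zc [sc zcM]] //.
have [Za Zb Zc Zd det1] := SL2_mx2P GA.
have [c0|c0] := eqVneq c 0.
  by rewrite c0 in det1 *; apply: x12_rep_upper => //; rewrite -det1 mulr0 subr0.
have zc0 : zc != 0 by apply: contra_neq c0 => zc0; apply: (mulfI s0); rewrite sc zc0 mulr0.
set q := (za %/ zc)%Z; set r := (za %% zc)%Z.
have Zq : Zn q%:~R := inZinv_int n q.
have [Gw xw] := (SL2_w12N1, x12_rep_w12N1).
have GB : G (mx2 c d (q%:~R * c - a) (q%:~R * d - b)).
  by apply: SL2_mx2; auto; rewrite -det1; ring.
have -> : mx2 a b c d = x12 q%:~R *m (w12 (-1) *m mx2 c d (q%:~R * c - a) (q%:~R * d - b)).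
  by rewrite !mulmx_mx2 invrN invr1 opprK; congr mx2; ring.
apply: (x12_repM (SL2_x12 Zq) (SL2_mul Gw GB) (x12_rep_x12 Zq)).
apply: (x12_repM Gw GB xw); apply: (IH _ _ _ _ s0 GB); first by exists zc.
exists (- r); split.
  have zaE : za = q * zc + r := divz_eq za zc.
  by rewrite mulrBr mulrCA sc sa zaE intrD intrM intrN; ring.
by have := ltz_mod za zc0; have := modz_ge0 za zc0; rewrite abszN -/r; lia.
Qed.

Lemma x12_rep_SL2 A : G A -> x12_rep A.
Proof.
move=> GA; case/SL2P: (GA) => a b c d AE [k [za aE]] _ [l [zc cE]] _ _; rewrite AE in GA *.
apply: (@x12_rep_euclid (N ^+ (k + l)) (`|zc * n%:R ^+ k|).+1) => //.
- by rewrite expf_neq0 // natrn_neq0.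
- by exists (za * n%:R ^+ l); rewrite intrM rmorphXn /= rmorph_nat -aE exprD; ring.
- by exists (zc * n%:R ^+ k); rewrite intrM rmorphXn /= rmorph_nat -cE exprD; split=> //; ring.
Qed.

Lemma C_x12_mulz t (k : int) : C (x12 t) -> C (x12 (k%:~R * t)).
Proof.
move=> Ct; have Cnat (m : nat) : C (x12 (m%:R * t)).
  elim: m => [|m IHm]; first by rewrite mul0r x12_0; apply: cSL2_one.
  by rewrite mulrSr mulrDl mul1r -x12D; apply: cSL2_mul.
case: k => m; first exact: Cnat.
by rewrite NegzE intrN mulNr -invmx_x12; apply/cSL2_inv/Cnat.
Qed.

Lemma equiv_x12_x12 (k : int) : equiv_x12 (x12 k%:~R) k.
Proof. by rewrite /equiv_x12 x12D addrN x12_0; apply: cSL2_one. Qed.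

Lemma C_x12_12 : C (x12 12).
Proof.
have Gx : G (x12 1) by apply: SL2_x12.
have Gy : G (x21 (-1)) by apply: SL2_x21; auto.
have Gw : G (w12 1) by apply: SL2_w12; rewrite ?invr1 ?oner_neq0; auto.
have ex := equiv_x12_x12 1.
have ey : equiv_x12 (x21 (-1)) 1 by rewrite x21_conj opprK; apply: equiv_x12_conj.
have ew : equiv_x12 (w12 1) 3.
  rewrite w12E ?oner_neq0 // invr1.
  exact: equiv_x12_mul (SL2_mul Gx Gy) Gx (equiv_x12_mul Gx Gy ex ey) ex.
have [Gw2 Gw3] := (SL2_mul Gw Gw, SL2_mul (SL2_mul Gw Gw) Gw).
have := equiv_x12_mul Gw3 Gw (equiv_x12_mul Gw2 Gw (equiv_x12_mul Gw Gw ew ew) ew) ew.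
by rewrite w12_1_order4 /equiv_x12 mul1mx => /cSL2_inv; rewrite invmx_x12 opprK.
Qed.

Lemma C_x12_sqr_pred : C (x12 (N ^+ 2 - 1)).
Proof.
have N0 := natrn_neq0 n_gt0; have N'0 : N^-1 != 0 by rewrite invr_eq0.
have -> : x12 (N ^+ 2 - 1) = commm (h12 N^-1) (x12 (- 1)).
  rewrite /commm invmx_h12 // invmx_x12 opprK -{1}[N]invrK h12_conj_x12 // x12D.
  by congr x12; field.
apply: cSL2_comm; last by apply: SL2_x12; auto.
by apply: SL2_h12; rewrite ?invrK; [| exact: (inZinv_natrVX n_gt0 1) | exact: (inZinv_natrX n 1)].
Qed.

Lemma C_x12_order : C (x12 (SL2ab_order n)%:R).
Proof.
have C_comb (a b : int) : C (x12 (a%:~R * 12 + b%:~R * (N ^+ 2 - 1))).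
  by rewrite -x12D; apply: cSL2_mul; apply: C_x12_mulz; [apply: C_x12_12 | apply: C_x12_sqr_pred].
have [t NE] : exists t : nat, N ^+ 2 = t%:R * 12 + (n ^ 2 %% 12)%:R.
  by exists (n ^ 2 %/ 12)%N; rewrite -natrX {1}(divn_eq (n ^ 2) 12) natrD natrM.
rewrite /SL2ab_order sqrn_mod12 in NE *.
case: (2 %| n)%N (3 %| n)%N NE => [] [] NE.
- by have := C_comb t (-1); congr (C (x12 _)); rewrite NE; ring.
- by have := C_comb (- t%:Z) 1; congr (C (x12 _)); rewrite NE; ring.
- by have := C_comb (t + 1)%N (-1); congr (C (x12 _)); rewrite NE; ring.
- by have := C_comb 1 0; congr (C (x12 _)); ring.
Qed.

End SL2Z.

Section HomFromSL2.
Variables (n : nat) (H : zmodType) (f : 'M[rat]_2 -> H).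
Hypothesis n_gt0 : (0 < n)%N.

Local Notation G := (SL2 n).
Local Notation C := (in_commSL2 n).

Hypothesis f_hom : forall A B, G A -> G B -> f (A *m B) = f A + f B.

Lemma hom1 : f 1%:M = 0.
Proof. by apply: (@addrI _ (f 1%:M)); rewrite -f_hom ?mulmx1 ?addr0 //; apply: SL2_1. Qed.

Lemma homV A : G A -> f (invmx A) = - f A.
Proof.
move=> GA; have := f_hom GA (SL2_inv GA).
have -> : A *m invmx A = 1%:M by rewrite mulmxV //; apply: SL2_unit GA.
by rewrite hom1 => /eqP; rewrite eq_sym addrC addr_eq0 => /eqP.
Qed.

Lemma hom_comm X : C X -> f X = 0.
Proof.
elim=> {X} [|A B GA GB|X Y CX fX CY fY|X CX fX]; first exact: hom1.
- have [GA' GB'] := (SL2_inv GA, SL2_inv GB); have GAB' := SL2_mul GA' GB'.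
  rewrite /commm !f_hom ?homV //; last exact: SL2_mul.
  by rewrite addrAC -!addrA addKr addNr.
- by rewrite f_hom ?fX ?fY ?addr0 //; apply: commSL2_sub.
- by rewrite homV ?fX ?oppr0 //; apply: commSL2_sub.
Qed.

Lemma hom_x12 (k : int) : f (x12 k%:~R) = f (x12 1) *~ k.
Proof.
have Gnat (m : nat) : G (x12 m%:R) := SL2_x12_int n m.
have fnat (m : nat) : f (x12 m%:R) = f (x12 1) *+ m.
  elim: m => [|m IHm]; first by rewrite x12_0 hom1.
  by rewrite [in RHS]mulrSr -IHm -f_hom ?x12D -?mulrSr; [| exact: Gnat | exact: Gnat 1%N].
case: k => m; first exact: fnat.
by rewrite NegzE intrN mulrNz -!pmulrn -invmx_x12 homV ?fnat //; exact: Gnat.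
Qed.

(* Since every element of G is congruent to some x12 k, the kernel only needs
   to be checked on these. *)
Lemma SL2ab_iso_cyclic :
    (forall h : H, exists k : int, f (x12 1) *~ k = h) ->
    (forall k : int, f (x12 1) *~ k = 0 -> C (x12 k%:~R)) ->
  SL2ab_iso n H.
Proof.
move=> f_onto f_ker; exists f; split=> // [h|A GA].
  by have [k <-] := f_onto h; exists (x12 k%:~R); split; [apply: SL2_x12_int | apply: hom_x12].
split=> [fA0|]; last exact: hom_comm.
have [k Ak] := x12_rep_SL2 n_gt0 GA.
have Gk : G (x12 (- k%:~R)) by rewrite -intrN; apply: SL2_x12_int.
have := hom_comm Ak; rewrite f_hom // fA0 add0r -intrN hom_x12 mulrNz => /eqP.
rewrite oppr_eq0 => /eqP/f_ker Ck.
by rewrite -[A]mulmx1 -(x12_0 rat) -(addNr k%:~R) -x12D mulmxA; apply: cSL2_mul.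
Qed.

End HomFromSL2.

Section RatReduction.
Variable R : comUnitRingType.

Definition den_unit (x : rat) :=
  exists u z : int, (u%:~R : R) \is a GRing.unit /\ x * u%:~R = z%:~R.

Lemma ratrE x (u z : int) : (u%:~R : R) \is a GRing.unit -> x * u%:~R = z%:~R ->
  @ratr R x = z%:~R / u%:~R.
Proof.
move=> u_unit xu; have numE : numq x * u = z * denq x.
  by apply: (@intr_inj rat); rewrite !intrM numqE -xu; ring.
have [w uE] : exists w, u = w * denq x.
  apply/dvdzP; rewrite -(@Gauss_dvdzr _ (numq x)) ?numE ?dvdz_mull //.
  by rewrite coprimezE coprime_sym coprime_num_den.
have den_unit : ((denq x)%:~R : R) \is a GRing.unit.
  by move: u_unit; rewrite uE intrM unitrM => /andP[].
apply: (mulIr u_unit); rewrite divrK // mulrAC -intrM numE intrM mulrK //.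
Qed.

Lemma ratrD x y : den_unit x -> den_unit y -> @ratr R (x + y) = @ratr R x + @ratr R y.
Proof.
move=> [u [z [Uu xu]]] [v [w [Uv yv]]].
have Uuv : ((u * v)%:~R : R) \is a GRing.unit by rewrite intrM unitrM Uu Uv.
rewrite (ratrE Uu xu) (ratrE Uv yv) (@ratrE _ (u * v) (z * v + w * u)) //; last first.
  by rewrite intrD !intrM -xu -yv; ring.
rewrite intrD !intrM invrM //.
transitivity (z%:~R / u%:~R * (v%:~R / v%:~R) + w%:~R / v%:~R * (u%:~R / u%:~R) : R).
  by ring.
by rewrite !divrr // !mulr1.
Qed.

Lemma ratrM x y : den_unit x -> den_unit y -> @ratr R (x * y) = @ratr R x * @ratr R y.
Proof.
move=> [u [z [Uu xu]]] [v [w [Uv yv]]].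
rewrite (ratrE Uu xu) (ratrE Uv yv) (@ratrE _ (u * v) (z * w)).
- by rewrite !intrM invrM //; ring.
- by rewrite intrM unitrM Uu Uv.
- by rewrite !intrM -xu -yv; ring.
Qed.

Lemma ratrN x : den_unit x -> @ratr R (- x) = - @ratr R x.
Proof.
move=> [u [z [Uu xu]]]; rewrite (ratrE Uu xu) (@ratrE _ u (- z)) //.
  by rewrite intrN mulNr.
by rewrite mulNr xu intrN.
Qed.

Lemma inZinv_den_unit n x : (n%:R : R) \is a GRing.unit -> inZinv n x -> den_unit x.
Proof.
move=> n_unit [k [z xz]]; exists (n%:R ^+ k), z.
by rewrite !rmorphXn /= !rmorph_nat unitrX.
Qed.

End RatReduction.

Definition Zp_enum p : seq 'Z_p.+2 := [seq inZp i | i <- iota 0 p.+2].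

Lemma mem_Zp_enum p (x : 'Z_p.+2) : x \in Zp_enum p.
Proof. by rewrite -[x]valZpK map_f // mem_iota ltn_ord. Qed.

(* Written for [vm_compute]: [enum] is locked and [ord_enum] is stuck on opaque
   proofs, hence [Zp_enum]; and [if] rather than [==>], whose arguments would
   be evaluated eagerly. *)
Definition SL2_hom_check p (f : 'Z_p.+2 -> 'Z_p.+2 -> 'Z_p.+2 -> 'Z_p.+2 -> 'Z_p.+2) :=
  let Z := Zp_enum p in
  all (fun a => all (fun b => all (fun c => all (fun d => if a * d - b * c != 1 then true else
   all (fun a' => all (fun b' => all (fun c' => all (fun d' =>
     if a' * d' - b' * c' != 1 then true else
     f (a * a' + b * c') (a * b' + b * d') (c * a' + d * c') (c * b' + d * d')
       == f a b c d + f a' b' c' d') Z) Z) Z) Z) Z) Z) Z) Z.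

Lemma SL2_hom_checkP p f : @SL2_hom_check p f ->
  forall a b c d a' b' c' d', a * d - b * c = 1 -> a' * d' - b' * c' = 1 ->
  f (a * a' + b * c') (a * b' + b * d') (c * a' + d * c') (c * b' + d * d') =
  f a b c d + f a' b' c' d'.
Proof.
move=> fP a b c d a' b' c' d' det1 det1'; apply/eqP.
move: fP => /allP/(_ a (mem_Zp_enum a))/allP/(_ b (mem_Zp_enum b))/allP/(_ c (mem_Zp_enum c)).
move=> /allP/(_ d (mem_Zp_enum d)); rewrite det1 eqxx.
move=> /allP/(_ a' (mem_Zp_enum a'))/allP/(_ b' (mem_Zp_enum b'))/allP/(_ c' (mem_Zp_enum c')).
by move=> /allP/(_ d' (mem_Zp_enum d')); rewrite det1' eqxx.
Qed.

Definition lookup p (tab : seq nat) (a b c d : 'Z_p.+2) : 'Z_p.+2 :=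
  (nth 0 tab (a + p.+2 * (b + p.+2 * (c + p.+2 * d))))%N%:R.

(* Value tables of homomorphisms SL_2(Z/3) -> Z/3 and SL_2(Z/4) -> Z/4 sending
   x12 1 to 1. *)
Definition SL2_Z3_ab_table := [:: 0; 0; 0; 0; 0; 0; 0; 0; 0; 0; 0; 0; 0; 0; 0; 0; 1; 2; 0; 0; 0; 0; 2; 1; 0; 0; 0; 0; 0; 0; 0; 1; 0; 0; 2; 0; 0; 2; 0; 0; 0; 0; 1; 0; 0; 0; 1; 0; 2; 0; 0; 0; 0; 0; 0; 0; 0; 0; 0; 2; 0; 0; 1; 0; 0; 1; 0; 0; 0; 2; 0; 0; 0; 0; 2; 1; 0; 0; 0; 0; 0]%N.
Definition SL2_Z4_ab_table := [:: 0; 0; 0; 0; 0; 0; 0; 0; 0; 0; 0; 0; 0; 0; 0; 0; 0; 0; 0; 0; 0; 0; 0; 0; 0; 0; 0; 0; 1; 2; 3; 0; 0; 0; 0; 0; 0; 0; 0; 0; 0; 0; 0; 0; 0; 0; 0; 0; 0; 0; 0; 0; 3; 2; 1; 0; 0; 0; 0; 0; 0; 0; 0; 0; 0; 0; 0; 0; 0; 1; 0; 0; 0; 2; 0; 0; 0; 3; 0; 0; 0; 3; 0; 0; 0; 0; 0; 0; 0; 0; 0; 1; 2; 0; 0; 0; 0; 2; 0; 0; 0; 0; 0; 3; 0; 0; 0; 0; 0; 0; 0; 1; 0; 1; 0; 0; 2; 0; 0; 0; 0; 0; 0; 3; 0; 0; 0; 0; 0; 0; 0; 0; 0; 0; 0;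 0; 0; 0; 0; 0; 0; 0; 0; 0; 0; 0; 0; 0; 0; 0; 0; 2; 0; 0; 0; 0; 3; 0; 1; 0; 0; 0; 0; 0; 0; 0; 0; 0; 0; 0; 0; 0; 0; 0; 0; 0; 0; 0; 0; 0; 1; 0; 3; 0; 0; 0; 0; 0; 0; 0; 0; 2; 0; 0; 0; 2; 0; 0; 0; 1; 0; 0; 0; 0; 0; 0; 0; 3; 0; 0; 0; 3; 0; 0; 2; 0; 0; 1; 0; 0; 0; 0; 0; 0; 0; 0; 0; 0; 0; 3; 0; 0; 0; 0; 0; 2; 0; 1; 0; 0; 0; 0; 0; 1; 0; 0; 0; 0; 0; 3; 0; 0; 0; 0; 2; 0]%N.

Lemma SL2_Z3_ab_hom : SL2_hom_check (@lookup 1 SL2_Z3_ab_table).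
Proof. by vm_compute. Qed.

Lemma SL2_Z4_ab_hom : SL2_hom_check (@lookup 2 SL2_Z4_ab_table).
Proof. by vm_compute. Qed.

Lemma SL2_Z3_ab_x12 : @lookup 1 SL2_Z3_ab_table 1 1 0 1 = 1.
Proof. exact: val_inj. Qed.

Lemma SL2_Z4_ab_x12 : @lookup 2 SL2_Z4_ab_table 1 1 0 1 = 1.
Proof. exact: val_inj. Qed.

Section TableMap.
Variables (n p : nat) (tab : seq nat).
Hypotheses (n_coprime : coprime p.+2 n) (tab_hom : SL2_hom_check (@lookup p tab)).

Local Notation red := (@ratr 'Z_p.+2).
Local Notation Zn := (inZinv n).

Definition table_map (A : 'M[rat]_2) : 'Z_p.+2 :=
  lookup tab (red (A 0 0)) (red (A 0 1)) (red (A 1 0)) (red (A 1 1)).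

Lemma inZinv_den_unitZp x : Zn x -> den_unit 'Z_p.+2 x.
Proof. by apply: inZinv_den_unit; rewrite unitZpE. Qed.

Lemma red_bilin a b c d : Zn a -> Zn b -> Zn c -> Zn d ->
  red (a * b + c * d) = red a * red b + red c * red d.
Proof.
by move=> Za Zb Zc Zd; rewrite ratrD ?ratrM //; apply: inZinv_den_unitZp; auto.
Qed.

Lemma table_map_hom A B : SL2 n A -> SL2 n B ->
  table_map (A *m B) = table_map A + table_map B.
Proof.
case/SL2P=> a b c d -> Za Zb Zc Zd det1; case/SL2P=> a' b' c' d' -> Za' Zb' Zc' Zd' det1'.
have red_det1 x y z w : Zn x -> Zn y -> Zn z -> Zn w -> x * w - y * z = 1 ->
    red x * red w - red y * red z = 1.
  move=> Zx Zy Zz Zw xyzw; transitivity (red (x * w + y * - z)).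
    by rewrite red_bilin ?(ratrN (inZinv_den_unitZp Zz)) ?mulrN; auto.
  by rewrite mulrN xyzw (ratr_int _ 1).
rewrite /table_map mulmx_mx2 !mxE /= !red_bilin //.
by apply: (SL2_hom_checkP tab_hom); apply: red_det1.
Qed.

Lemma table_map_x12 : table_map (x12 1) = lookup tab 1 1 0 1.
Proof. by rewrite /table_map !mxE /= (ratr_int _ 0) (ratr_int _ 1). Qed.

End TableMap.

Lemma natr_mod_mul (R : pzSemiRingType) m k a : (m * k)%:R = 0 :> R ->
  (a %% m)%:R * k%:R = a%:R * k%:R :> R.
Proof.
move=> mk0; rewrite [in RHS](divn_eq a m) natrD natrM mulrDl -mulrA -(natrM _ m k).
by rewrite mk0 mulr0 add0r.
Qed.

(* 9 and 4 are the idempotents of Z/12 = Z/4 x Z/3. *)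
Definition crt12 (x : 'Z_4) (y : 'Z_3) : 'Z_12 := (val x)%:R * 9 + (val y)%:R * 4.

Lemma crt12D x x' y y' : crt12 (x + x') (y + y') = crt12 x y + crt12 x' y'.
Proof.
rewrite /crt12 /= (@natr_mod_mul _ 4 9) ?(@natr_mod_mul _ 3 4); try exact: val_inj.
by rewrite !natrD; ring.
Qed.

Lemma crt12_11 : crt12 1 1 = 1.
Proof. exact: val_inj. Qed.

Lemma Zp_intr_eq0 p (k : int) : (k%:~R : 'Z_p.+2) = 0 -> (p.+2%:Z %| k)%Z.
Proof.
have natr_eq0 m : (m%:R : 'Z_p.+2) = 0 -> (p.+2 %| m)%N.
  by move/(congr1 val); rewrite /= val_Zp_nat // /dvdn => ->.
case: k => m; first exact: natr_eq0.
by rewrite NegzE intrN => /eqP; rewrite oppr_eq0 dvdzE => /eqP/natr_eq0.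
Qed.

Section CyclicQuotients.
Variable n : nat.
Hypothesis n_gt0 : (0 < n)%N.

Local Notation C := (in_commSL2 n).

Lemma SL2ab_iso_trivial : C (x12 1) -> SL2ab_iso n 'I_1.
Proof.
move=> C1; apply: (@SL2ab_iso_cyclic n _ (fun _ => 0) n_gt0) => [A B _ _|h|k _].
- by rewrite addr0.
- by exists 0; apply: val_inj; case: h => [[]].
- by rewrite -[k%:~R]mulr1; apply: C_x12_mulz.
Qed.

Lemma SL2ab_iso_Zp p (f : 'M[rat]_2 -> 'Z_p.+2) :
    (forall A B, SL2 n A -> SL2 n B -> f (A *m B) = f A + f B) ->
    f (x12 1) = 1 -> C (x12 p.+2%:R) ->
  SL2ab_iso n 'Z_p.+2.
Proof.
move=> f_hom f1 Cp; apply: (SL2ab_iso_cyclic n_gt0 f_hom); rewrite f1.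
  by move=> h; exists (val h)%:Z; rewrite -[_ *~ _]/((val h)%:R) natr_Zp.
by move=> k /Zp_intr_eq0/dvdzP[j ->]; rewrite intrM; apply: C_x12_mulz.
Qed.

Lemma coprime3 : ~~ (3 %| n)%N -> coprime 3 n.
Proof. by rewrite prime_coprime. Qed.

Lemma coprime4 : ~~ (2 %| n)%N -> coprime 4 n.
Proof. by rewrite -[4%N]/(2 ^ 2)%N coprime_pexpl // prime_coprime. Qed.

Lemma SL2ab_iso_Z3 : ~~ (3 %| n)%N -> C (x12 3) -> SL2ab_iso n 'Z_3.
Proof.
move=> n3; apply: SL2ab_iso_Zp (table_map_hom (coprime3 n3) SL2_Z3_ab_hom) _.
by rewrite table_map_x12 SL2_Z3_ab_x12.
Qed.

Lemma SL2ab_iso_Z4 : ~~ (2 %| n)%N -> C (x12 4) -> SL2ab_iso n 'Z_4.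
Proof.
move=> n2; apply: SL2ab_iso_Zp (table_map_hom (coprime4 n2) SL2_Z4_ab_hom) _.
by rewrite table_map_x12 SL2_Z4_ab_x12.
Qed.

Lemma SL2ab_iso_Z12 : ~~ (2 %| n)%N -> ~~ (3 %| n)%N -> C (x12 12) -> SL2ab_iso n 'Z_12.
Proof.
move=> n2 n3; apply: (@SL2ab_iso_Zp 10
  (fun A => crt12 (table_map 2 SL2_Z4_ab_table A) (table_map 1 SL2_Z3_ab_table A))).
  move=> A B GA GB; rewrite (table_map_hom (coprime4 n2) SL2_Z4_ab_hom) //.
  by rewrite (table_map_hom (coprime3 n3) SL2_Z3_ab_hom) // crt12D.
by rewrite !table_map_x12 SL2_Z4_ab_x12 SL2_Z3_ab_x12 crt12_11.
Qed.

End CyclicQuotients.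

Theorem mainTheorem4 (n : nat) (hn : (1 < n)%N) :
  [/\ (2 %| n)%N -> (3 %| n)%N -> SL2ab_iso n 'I_1,
      (2 %| n)%N -> ~~ (3 %| n)%N -> SL2ab_iso n 'I_3,
      ~~ (2 %| n)%N -> (3 %| n)%N -> SL2ab_iso n 'I_4
    & ~~ (2 %| n)%N -> ~~ (3 %| n)%N -> SL2ab_iso n 'I_12].
Proof.
have n_gt0 : (0 < n)%N := ltnW hn.
have Corder := C_x12_order n_gt0; rewrite /SL2ab_order in Corder.
split=> [h2 h3|h2 h3|h2 h3|h2 h3].
- by rewrite h2 h3 in Corder; apply: SL2ab_iso_trivial.
- by rewrite h2 (negPf h3) in Corder; apply: SL2ab_iso_Z3.
- by rewrite (negPf h2) h3 in Corder; apply: SL2ab_iso_Z4.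
- by rewrite (negPf h2) (negPf h3) in Corder; apply: SL2ab_iso_Z12.
Qed.
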